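(* Let $\phi$ be an IPC formula disjunctive in the variable $x$. Then for every Heyting algebra $H$ and every valuation $v$ in $H$ of the variables of $\phi$ other than $x$, the monotone map $h\mapsto[\![\phi]\!]_{(v,h/x)}$ has a least fixed point, equal to the value under $v$ of $\big(\bigwedge_{\alpha\in\mathrm{Head}(\phi)}\alpha\big)\to\big(\bigvee_{\beta\in\mathrm{Side}(\phi)}\beta\big)$ (empty meet $=\top$, empty join $=\bot$).
   Context: A formula is disjunctive in $x$ if it is generated by the grammar $\phi ::= x \mid \alpha\to\phi \mid \beta\vee\phi \mid \phi\vee\phi$, where $\alpha,\beta$ range over IPC formulas not containing $x$ (disjunctions up to commutativity). $\mathrm{Head}(\phi)$ is the set of formulas $\alpha$ used in productions $\alpha\to\phi'$ in the parse of $\phi$; $\mathrm{Side}(\phi)$ is the set of formulas $\beta$ used in productions $\beta\vee\phi'$. $(v,h/x)$ extends $v$ by sending $x$ to $h$. *)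

From Stdlib Require Import List Arith.
Import ListNotations.
Set Implicit Arguments.

Inductive form : Type :=
| FVar : nat -> form
| FBot : form
| FTop : form
| FAnd : form -> form -> form
| FOr  : form -> form -> form
| FImp : form -> form -> form.

Fixpoint occurs (x : nat) (p : form) : bool :=
  match p with
  | FVar y => Nat.eqb x y
  | FBot | FTop => false
  | FAnd a b | FOr a b | FImp a b => occurs x a || occurs x b
  end.

Record HeytingAlgebra := {
  car :> Type;
  le : car -> car -> Prop;
  meet : car -> car -> car;
  join : car -> car -> car;
  imp : car -> car -> car;
  top : car;
  bot : car;
  le_refl : forall a, le a a;
  le_trans : forall a b c, le a b -> le b c -> le a c;
  le_antisym : forall a b, le a b -> le b a -> a = b;
  meet_glb : forall a b c, le c (meet a b) <-> (le c a /\ le c b);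
  join_lub : forall a b c, le (join a b) c <-> (le a c /\ le b c);
  top_greatest : forall a, le a top;
  bot_least : forall a, le bot a;
  imp_adj : forall a b c, le c (imp a b) <-> le (meet c a) b
}.

Fixpoint eval (H : HeytingAlgebra) (v : nat -> H) (p : form) : H :=
  match p with
  | FVar y => v y
  | FBot => bot H
  | FTop => top H
  | FAnd a b => meet H (eval H v a) (eval H v b)
  | FOr a b => join H (eval H v a) (eval H v b)
  | FImp a b => imp H (eval H v a) (eval H v b)
  end.
Arguments eval {H} v p.

Definition upd (H : HeytingAlgebra) (v : nat -> H) (x : nat) (h : H) : nat -> H :=
  fun y => if Nat.eqb y x then h else v y.

(* Parse trees of the grammar  phi ::= x | alpha -> phi | beta \/ phi | phi \/ phi,
   with beta \/ phi taken up to commutativity (DOrL / DOrR). *)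
Inductive dtree : Type :=
| DX : dtree
| DImp : form -> dtree -> dtree
| DOrL : form -> dtree -> dtree
| DOrR : dtree -> form -> dtree
| DOr : dtree -> dtree -> dtree.

Fixpoint dform (x : nat) (t : dtree) : form :=
  match t with
  | DX => FVar x
  | DImp a t' => FImp a (dform x t')
  | DOrL b t' => FOr b (dform x t')
  | DOrR t' b => FOr (dform x t') b
  | DOr t1 t2 => FOr (dform x t1) (dform x t2)
  end.

Fixpoint dwf (x : nat) (t : dtree) : bool :=
  match t with
  | DX => true
  | DImp a t' => negb (occurs x a) && dwf x t'
  | DOrL b t' | DOrR t' b => negb (occurs x b) && dwf x t'
  | DOr t1 t2 => dwf x t1 && dwf x t2
  end.

Definition disjunctive (x : nat) (p : form) : Prop :=
  exists t, dwf x t = true /\ dform x t = p.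

Fixpoint Head (t : dtree) : list form :=
  match t with
  | DX => []
  | DImp a t' => a :: Head t'
  | DOrL _ t' | DOrR t' _ => Head t'
  | DOr t1 t2 => Head t1 ++ Head t2
  end.

Fixpoint Side (t : dtree) : list form :=
  match t with
  | DX => []
  | DImp _ t' => Side t'
  | DOrL b t' | DOrR t' b => b :: Side t'
  | DOr t1 t2 => Side t1 ++ Side t2
  end.

Definition bigAnd (l : list form) : form := fold_right FAnd FTop l.
Definition bigOr (l : list form) : form := fold_right FOr FBot l.

Definition is_least_fixed_point (H : HeytingAlgebra) (f : H -> H) (m : H) : Prop :=
  f m = m /\ forall h, f h = h -> le H m h.
Arguments upd {H} v x h.
Arguments is_least_fixed_point {H} f m.

(* Write [f h] for the value of the formula with [x := h], [A] for the meet of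
   its heads and [B] for the join of its sides.  By induction on the parse,
   [f] is monotone and inflationary, [B <= f h] and [f h <= A -> h \/ B];
   at [h = A -> B] the last bound collapses to [A -> B], so [A -> B] is a fixed
   point.  For leastness, the induction shows more generally that
   [c /\ f h <= h] implies [c /\ (A -> h \/ B) <= h] for every context [c]:
   passing through [alpha -> phi] moves [alpha] into the context, and a
   disjunction [phi1 \/ phi2] is handled by using [phi2] in the context
   [c /\ A1].  Taking [c] to be top at a fixed point [h] gives [A -> B <= h]. *)

From Stdlib Require Import List Arith Bool RelationClasses.

Local Notation "a ⊑ b" := (le _ a b) (at level 70).
Local Notation "a ⊓ b" := (meet _ a b) (at level 40, left associativity).
Local Notation "a ⊔ b" := (join _ a b) (at level 50, left associativity).
Local Notation "a ⇒ b" := (imp _ a b) (at level 60, right associativity).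

#[export] Instance le_preorder (H : HeytingAlgebra) : PreOrder (le H) :=
  {| PreOrder_Reflexive := le_refl H; PreOrder_Transitive := le_trans H |}.

Section HeytingFacts.

Context {H : HeytingAlgebra}.

Lemma le_meet_l (a b : H) : a ⊓ b ⊑ a.
Proof. exact (proj1 (proj1 (meet_glb H a b _) (le_refl H _))). Qed.

Lemma le_meet_r (a b : H) : a ⊓ b ⊑ b.
Proof. exact (proj2 (proj1 (meet_glb H a b _) (le_refl H _))). Qed.

Lemma meet_greatest (a b c : H) : c ⊑ a -> c ⊑ b -> c ⊑ a ⊓ b.
Proof. intros; apply meet_glb; auto. Qed.

Lemma le_join_l (a b : H) : a ⊑ a ⊔ b.
Proof. exact (proj1 (proj1 (join_lub H a b _) (le_refl H _))). Qed.

Lemma le_join_r (a b : H) : b ⊑ a ⊔ b.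
Proof. exact (proj2 (proj1 (join_lub H a b _) (le_refl H _))). Qed.

Lemma join_least (a b c : H) : a ⊑ c -> b ⊑ c -> a ⊔ b ⊑ c.
Proof. intros; apply join_lub; auto. Qed.

Lemma imp_intro (a b c : H) : c ⊓ a ⊑ b -> c ⊑ a ⇒ b.
Proof. apply imp_adj. Qed.

Lemma imp_elim (a b : H) : (a ⇒ b) ⊓ a ⊑ b.
Proof. apply imp_adj; reflexivity. Qed.

Lemma meet_mono (a b a' b' : H) : a ⊑ a' -> b ⊑ b' -> a ⊓ b ⊑ a' ⊓ b'.
Proof.
  intros; apply meet_greatest.
  - transitivity a; [apply le_meet_l | assumption].
  - transitivity b; [apply le_meet_r | assumption].
Qed.

Lemma join_mono (a b a' b' : H) : a ⊑ a' -> b ⊑ b' -> a ⊔ b ⊑ a' ⊔ b'.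
Proof.
  intros; apply join_least.
  - transitivity a'; [assumption | apply le_join_l].
  - transitivity b'; [assumption | apply le_join_r].
Qed.

Lemma le_meet_comm (a b : H) : a ⊓ b ⊑ b ⊓ a.
Proof. apply meet_greatest; [apply le_meet_r | apply le_meet_l]. Qed.

Lemma le_imp (a b : H) : b ⊑ a ⇒ b.
Proof. apply imp_intro, le_meet_l. Qed.

Lemma imp_mono (a a' b b' : H) : a' ⊑ a -> b ⊑ b' -> a ⇒ b ⊑ a' ⇒ b'.
Proof.
  intros Ha Hb; apply imp_intro; transitivity b; [|exact Hb].
  transitivity ((a ⇒ b) ⊓ a); [apply meet_mono; [reflexivity | exact Ha] | apply imp_elim].
Qed.

Lemma imp_mono_r (a b b' : H) : b ⊑ b' -> a ⇒ b ⊑ a ⇒ b'.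
Proof. intros; apply imp_mono; [reflexivity | assumption]. Qed.

Lemma meet_imp_le_imp (c a y y' : H) : c ⊓ y ⊑ y' -> c ⊓ (a ⇒ y) ⊑ a ⇒ y'.
Proof.
  intros Hy; apply imp_intro; transitivity (c ⊓ y); [|exact Hy].
  apply meet_greatest.
  - transitivity (c ⊓ (a ⇒ y)); apply le_meet_l.
  - transitivity ((a ⇒ y) ⊓ a); [|apply imp_elim].
    apply meet_mono; [apply le_meet_r | reflexivity].
Qed.

Lemma meet_join_distr (a b c : H) : a ⊓ (b ⊔ c) ⊑ a ⊓ b ⊔ a ⊓ c.
Proof.
  assert (Hbc : b ⊔ c ⊑ a ⇒ (a ⊓ b ⊔ a ⊓ c)).
  { apply join_least; apply imp_intro.
    - transitivity (a ⊓ b); [apply le_meet_comm | apply le_join_l].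
    - transitivity (a ⊓ c); [apply le_meet_comm | apply le_join_r]. }
  transitivity ((a ⇒ (a ⊓ b ⊔ a ⊓ c)) ⊓ a); [|apply imp_elim].
  transitivity ((b ⊔ c) ⊓ a); [apply le_meet_comm | apply meet_mono; [exact Hbc | reflexivity]].
Qed.

Lemma meet_assoc (a b c : H) : a ⊓ (b ⊓ c) = a ⊓ b ⊓ c.
Proof.
  apply le_antisym; repeat apply meet_greatest;
    eauto using le_meet_l, le_meet_r, le_trans.
Qed.

Lemma join_assoc (a b c : H) : a ⊔ (b ⊔ c) = a ⊔ b ⊔ c.
Proof.
  apply le_antisym; repeat apply join_least;
    eauto using le_join_l, le_join_r, le_trans.
Qed.

Lemma meet_top_l (a : H) : top H ⊓ a = a.
Proof.
  apply le_antisym; [apply le_meet_r|].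
  apply meet_greatest; [apply top_greatest | reflexivity].
Qed.

Lemma join_bot_l (a : H) : bot H ⊔ a = a.
Proof.
  apply le_antisym; [|apply le_join_r].
  apply join_least; [apply bot_least | reflexivity].
Qed.

Lemma meet_imp_elim (c a z : H) : c ⊓ (a ⇒ z) ⊓ a ⊑ c ⊓ a ⊓ z.
Proof.
  repeat apply meet_greatest.
  - transitivity (c ⊓ (a ⇒ z)); apply le_meet_l.
  - apply le_meet_r.
  - transitivity ((a ⇒ z) ⊓ a); [|apply imp_elim].
    apply meet_mono; [apply le_meet_r | reflexivity].
Qed.

Lemma meet_imp_absorb (c a y b : H) : c ⊓ b ⊑ y -> c ⊓ (a ⇒ y ⊔ b) ⊑ c ⊓ (a ⇒ y).
Proof.
  intros Hb; apply meet_greatest; [apply le_meet_l|].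
  apply meet_imp_le_imp.
  transitivity (c ⊓ y ⊔ c ⊓ b); [apply meet_join_distr|].
  apply join_least; [apply le_meet_r | exact Hb].
Qed.

Lemma imp_join_imp_le (a b : H) : a ⇒ (a ⇒ b) ⊔ b ⊑ a ⇒ b.
Proof.
  apply imp_intro.
  transitivity (a ⊓ (a ⇒ b) ⊔ a ⊓ b).
  - transitivity (((a ⇒ b) ⊔ b) ⊓ a).
    + apply meet_greatest; [apply imp_elim | apply le_meet_r].
    + transitivity (a ⊓ ((a ⇒ b) ⊔ b)); [apply le_meet_comm | apply meet_join_distr].
  - apply join_least; [|apply le_meet_r].
    transitivity ((a ⇒ b) ⊓ a); [apply le_meet_comm | apply imp_elim].
Qed.

Lemma imp_curry (a b c : H) : a ⊓ b ⇒ c = a ⇒ b ⇒ c.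
Proof.
  apply le_antisym; repeat apply imp_intro.
  - transitivity ((a ⊓ b ⇒ c) ⊓ (a ⊓ b)); [|apply imp_elim].
    rewrite <- meet_assoc; reflexivity.
  - transitivity ((b ⇒ c) ⊓ b); [apply meet_greatest | apply imp_elim].
    + transitivity ((a ⇒ b ⇒ c) ⊓ a); [|apply imp_elim].
      apply meet_mono; [reflexivity | apply le_meet_l].
    + transitivity (a ⊓ b); apply le_meet_r.
Qed.

Lemma join_comm (a b : H) : a ⊔ b = b ⊔ a.
Proof. apply le_antisym; apply join_least; auto using le_join_l, le_join_r. Qed.

End HeytingFacts.

Section PrefixBound.

Context {H : HeytingAlgebra}.

Definition prefix_bounded (f : H -> H) (A B : H) : Prop :=
  forall c h, c ⊓ f h ⊑ h -> c ⊓ (A ⇒ h ⊔ B) ⊑ h.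

Lemma prefix_bounded_id : prefix_bounded (fun h => h) (top H) (bot H).
Proof.
  intros c h _; transitivity (top H ⇒ h ⊔ bot H); [apply le_meet_r|].
  transitivity (h ⊔ bot H); [|apply join_least; [reflexivity | apply bot_least]].
  transitivity ((top H ⇒ h ⊔ bot H) ⊓ top H); [|apply imp_elim].
  apply meet_greatest; [reflexivity | apply top_greatest].
Qed.

Lemma prefix_bounded_imp a f A B :
  (forall h, h ⊑ f h) -> prefix_bounded f A B ->
  prefix_bounded (fun h => a ⇒ f h) (a ⊓ A) B.
Proof.
  intros Hinfl Hf c h Hc; rewrite imp_curry.
  assert (Ha : c ⊓ a ⊓ (A ⇒ h ⊔ B) ⊑ h).
  { apply Hf; transitivity (c ⊓ (a ⇒ f h)); [|exact Hc].
    apply meet_mono; [apply le_meet_l | apply le_imp]. }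
  transitivity (c ⊓ (a ⇒ f h)); [|exact Hc].
  apply meet_greatest; [apply le_meet_l | apply imp_intro].
  transitivity h; [|apply Hinfl].
  transitivity (c ⊓ a ⊓ (A ⇒ h ⊔ B)); [apply meet_imp_elim | exact Ha].
Qed.

Lemma prefix_bounded_join_const b f A B :
  prefix_bounded f A B -> prefix_bounded (fun h => b ⊔ f h) A (b ⊔ B).
Proof.
  intros Hf c h Hc; rewrite (join_comm b), join_assoc.
  transitivity (c ⊓ (A ⇒ h ⊔ B)); [apply meet_imp_absorb | apply Hf].
  - transitivity h; [|apply le_join_l].
    transitivity (c ⊓ (b ⊔ f h)); [|exact Hc].
    apply meet_mono; [reflexivity | apply le_join_l].
  - transitivity (c ⊓ (b ⊔ f h)); [|exact Hc].
    apply meet_mono; [reflexivity | apply le_join_r].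
Qed.

Lemma prefix_bounded_join f1 f2 A1 A2 B1 B2 :
  (forall h, B1 ⊑ f1 h) -> (forall h, B2 ⊑ f2 h) ->
  prefix_bounded f1 A1 B1 -> prefix_bounded f2 A2 B2 ->
  prefix_bounded (fun h => f1 h ⊔ f2 h) (A1 ⊓ A2) (B1 ⊔ B2).
Proof.
  intros HB1 HB2 Hf1 Hf2 c h Hc.
  assert (Hc1 : c ⊓ f1 h ⊑ h).
  { transitivity (c ⊓ (f1 h ⊔ f2 h)); [|exact Hc].
    apply meet_mono; [reflexivity | apply le_join_l]. }
  assert (Hc2 : c ⊓ f2 h ⊑ h).
  { transitivity (c ⊓ (f1 h ⊔ f2 h)); [|exact Hc].
    apply meet_mono; [reflexivity | apply le_join_r]. }
  rewrite join_assoc.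
  transitivity (c ⊓ (A1 ⊓ A2 ⇒ h ⊔ B1)).
  { apply meet_imp_absorb; transitivity h; [|apply le_join_l].
    transitivity (c ⊓ f2 h); [|exact Hc2].
    apply meet_mono; [reflexivity | apply HB2]. }
  transitivity (c ⊓ (A1 ⊓ A2 ⇒ h)).
  { apply meet_imp_absorb; transitivity (c ⊓ f1 h); [|exact Hc1].
    apply meet_mono; [reflexivity | apply HB1]. }
  transitivity (c ⊓ (A1 ⇒ h ⊔ B1)); [|apply Hf1, Hc1].
  apply meet_greatest; [apply le_meet_l | apply imp_intro].
  transitivity h; [|apply le_join_l].
  rewrite imp_curry.
  transitivity (c ⊓ A1 ⊓ (A2 ⇒ h ⊔ B2)).
  - transitivity (c ⊓ A1 ⊓ (A2 ⇒ h)); [apply meet_imp_elim|].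
    apply meet_mono; [reflexivity | apply imp_mono_r, le_join_l].
  - apply Hf2; transitivity (c ⊓ f2 h); [|exact Hc2].
    apply meet_mono; [apply le_meet_l | reflexivity].
Qed.

End PrefixBound.

Section DisjunctiveValue.

Context {H : HeytingAlgebra} (v : nat -> H) (x : nat).

Lemma upd_var h : upd v x h x = h.
Proof. unfold upd; rewrite Nat.eqb_refl; reflexivity. Qed.

Lemma eval_upd_fresh h p : occurs x p = false -> eval (upd v x h) p = eval v p.
Proof.
  induction p as [y| | |p1 IH1 p2 IH2|p1 IH1 p2 IH2|p1 IH1 p2 IH2]; cbn; intros Hx;
    try reflexivity;
    try (apply orb_false_iff in Hx as [Hx1 Hx2]; rewrite IH1, IH2 by assumption; reflexivity).
  unfold upd; rewrite Nat.eqb_sym, Hx; reflexivity.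
Qed.

Lemma eval_bigAnd_app l1 l2 :
  eval v (bigAnd (l1 ++ l2)) = eval v (bigAnd l1) ⊓ eval v (bigAnd l2).
Proof.
  induction l1 as [|a l1 IH]; cbn [app bigAnd fold_right eval].
  - symmetry; apply meet_top_l.
  - fold (bigAnd (l1 ++ l2)) (bigAnd l1); rewrite IH; apply meet_assoc.
Qed.

Lemma eval_bigOr_app l1 l2 :
  eval v (bigOr (l1 ++ l2)) = eval v (bigOr l1) ⊔ eval v (bigOr l2).
Proof.
  induction l1 as [|b l1 IH]; cbn [app bigOr fold_right eval].
  - symmetry; apply join_bot_l.
  - fold (bigOr (l1 ++ l2)) (bigOr l1); rewrite IH; apply join_assoc.
Qed.

Definition dvalue (t : dtree) (h : H) : H := eval (upd v x h) (dform x t).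
Definition head_meet (t : dtree) : H := eval v (bigAnd (Head t)).
Definition side_join (t : dtree) : H := eval v (bigOr (Side t)).

Lemma dvalue_DX h : dvalue DX h = h.
Proof. apply upd_var. Qed.

Lemma dvalue_DImp a t h : occurs x a = false -> dvalue (DImp a t) h = eval v a ⇒ dvalue t h.
Proof.
  intros Ha; unfold dvalue; cbn [dform eval].
  rewrite (eval_upd_fresh h a Ha); reflexivity.
Qed.

Lemma dvalue_DOrL b t h : occurs x b = false -> dvalue (DOrL b t) h = eval v b ⊔ dvalue t h.
Proof.
  intros Hb; unfold dvalue; cbn [dform eval].
  rewrite (eval_upd_fresh h b Hb); reflexivity.
Qed.

Lemma dvalue_DOrR t b h : occurs x b = false -> dvalue (DOrR t b) h = eval v b ⊔ dvalue t h.
Proof.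
  intros Hb; unfold dvalue; cbn [dform eval].
  rewrite (eval_upd_fresh h b Hb); apply join_comm.
Qed.

Lemma dvalue_DOr t1 t2 h : dvalue (DOr t1 t2) h = dvalue t1 h ⊔ dvalue t2 h.
Proof. reflexivity. Qed.

Lemma head_meet_DX : head_meet DX = top H.
Proof. reflexivity. Qed.

Lemma head_meet_DImp a t : head_meet (DImp a t) = eval v a ⊓ head_meet t.
Proof. reflexivity. Qed.

Lemma head_meet_DOrL b t : head_meet (DOrL b t) = head_meet t.
Proof. reflexivity. Qed.

Lemma head_meet_DOrR t b : head_meet (DOrR t b) = head_meet t.
Proof. reflexivity. Qed.

Lemma head_meet_DOr t1 t2 : head_meet (DOr t1 t2) = head_meet t1 ⊓ head_meet t2.
Proof. apply eval_bigAnd_app. Qed.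

Lemma side_join_DX : side_join DX = bot H.
Proof. reflexivity. Qed.

Lemma side_join_DImp a t : side_join (DImp a t) = side_join t.
Proof. reflexivity. Qed.

Lemma side_join_DOrL b t : side_join (DOrL b t) = eval v b ⊔ side_join t.
Proof. reflexivity. Qed.

Lemma side_join_DOrR t b : side_join (DOrR t b) = eval v b ⊔ side_join t.
Proof. reflexivity. Qed.

Lemma side_join_DOr t1 t2 : side_join (DOr t1 t2) = side_join t1 ⊔ side_join t2.
Proof. apply eval_bigOr_app. Qed.

Lemma dvalue_mono t :
  dwf x t = true -> forall h1 h2, h1 ⊑ h2 -> dvalue t h1 ⊑ dvalue t h2.
Proof.
  induction t as [|a t IH|b t IH|t IH b|t1 IH1 t2 IH2]; cbn [dwf]; intros Hwf h1 h2 Hh.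
  - rewrite !dvalue_DX; exact Hh.
  - apply andb_prop in Hwf as [Ha%negb_true_iff Ht].
    rewrite !dvalue_DImp by exact Ha; apply imp_mono_r, IH; assumption.
  - apply andb_prop in Hwf as [Hb%negb_true_iff Ht].
    rewrite !dvalue_DOrL by exact Hb; apply join_mono; [reflexivity | apply IH; assumption].
  - apply andb_prop in Hwf as [Hb%negb_true_iff Ht].
    rewrite !dvalue_DOrR by exact Hb; apply join_mono; [reflexivity | apply IH; assumption].
  - apply andb_prop in Hwf as [Ht1 Ht2].
    rewrite !dvalue_DOr; apply join_mono; [apply IH1 | apply IH2]; assumption.
Qed.

Lemma dvalue_inflationary t : dwf x t = true -> forall h, h ⊑ dvalue t h.
Proof.
  induction t as [|a t IH|b t IH|t IH b|t1 IH1 t2 IH2]; cbn [dwf]; intros Hwf h.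
  - rewrite dvalue_DX; reflexivity.
  - apply andb_prop in Hwf as [Ha%negb_true_iff Ht].
    rewrite dvalue_DImp by exact Ha; transitivity (dvalue t h); [apply IH, Ht | apply le_imp].
  - apply andb_prop in Hwf as [Hb%negb_true_iff Ht].
    rewrite dvalue_DOrL by exact Hb; transitivity (dvalue t h); [apply IH, Ht | apply le_join_r].
  - apply andb_prop in Hwf as [Hb%negb_true_iff Ht].
    rewrite dvalue_DOrR by exact Hb; transitivity (dvalue t h); [apply IH, Ht | apply le_join_r].
  - apply andb_prop in Hwf as [Ht1 Ht2].
    rewrite dvalue_DOr; transitivity (dvalue t1 h); [apply IH1, Ht1 | apply le_join_l].
Qed.

Lemma side_join_le_dvalue t : dwf x t = true -> forall h, side_join t ⊑ dvalue t h.
Proof.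
  induction t as [|a t IH|b t IH|t IH b|t1 IH1 t2 IH2]; cbn [dwf]; intros Hwf h.
  - rewrite side_join_DX; apply bot_least.
  - apply andb_prop in Hwf as [Ha%negb_true_iff Ht].
    rewrite side_join_DImp, dvalue_DImp by exact Ha.
    transitivity (dvalue t h); [apply IH, Ht | apply le_imp].
  - apply andb_prop in Hwf as [Hb%negb_true_iff Ht].
    rewrite side_join_DOrL, dvalue_DOrL by exact Hb; apply join_mono; [reflexivity | apply IH, Ht].
  - apply andb_prop in Hwf as [Hb%negb_true_iff Ht].
    rewrite side_join_DOrR, dvalue_DOrR by exact Hb; apply join_mono; [reflexivity | apply IH, Ht].
  - apply andb_prop in Hwf as [Ht1 Ht2].
    rewrite side_join_DOr, dvalue_DOr; apply join_mono; [apply IH1 | apply IH2]; assumption.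
Qed.

Lemma dvalue_le_imp t :
  dwf x t = true -> forall h, dvalue t h ⊑ head_meet t ⇒ h ⊔ side_join t.
Proof.
  induction t as [|a t IH|b t IH|t IH b|t1 IH1 t2 IH2]; cbn [dwf]; intros Hwf h.
  - rewrite dvalue_DX, head_meet_DX, side_join_DX; apply imp_intro.
    transitivity h; [apply le_meet_l | apply le_join_l].
  - apply andb_prop in Hwf as [Ha%negb_true_iff Ht].
    rewrite dvalue_DImp, head_meet_DImp, side_join_DImp, imp_curry by exact Ha.
    apply imp_mono_r, IH, Ht.
  - apply andb_prop in Hwf as [Hb%negb_true_iff Ht].
    rewrite dvalue_DOrL, head_meet_DOrL, side_join_DOrL by exact Hb; apply join_least.
    + transitivity (h ⊔ (eval v b ⊔ side_join t)); [|apply le_imp].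
      transitivity (eval v b ⊔ side_join t); [apply le_join_l | apply le_join_r].
    + transitivity (head_meet t ⇒ h ⊔ side_join t); [apply IH, Ht|].
      apply imp_mono_r, join_mono; [reflexivity | apply le_join_r].
  - apply andb_prop in Hwf as [Hb%negb_true_iff Ht].
    rewrite dvalue_DOrR, head_meet_DOrR, side_join_DOrR by exact Hb; apply join_least.
    + transitivity (h ⊔ (eval v b ⊔ side_join t)); [|apply le_imp].
      transitivity (eval v b ⊔ side_join t); [apply le_join_l | apply le_join_r].
    + transitivity (head_meet t ⇒ h ⊔ side_join t); [apply IH, Ht|].
      apply imp_mono_r, join_mono; [reflexivity | apply le_join_r].
  - apply andb_prop in Hwf as [Ht1 Ht2].
    rewrite dvalue_DOr, head_meet_DOr, side_join_DOr; apply join_least.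
    + transitivity (head_meet t1 ⇒ h ⊔ side_join t1); [apply IH1, Ht1|].
      apply imp_mono; [apply le_meet_l | apply join_mono; [reflexivity | apply le_join_l]].
    + transitivity (head_meet t2 ⇒ h ⊔ side_join t2); [apply IH2, Ht2|].
      apply imp_mono; [apply le_meet_r | apply join_mono; [reflexivity | apply le_join_r]].
Qed.

Lemma dvalue_prefix_bounded t :
  dwf x t = true -> prefix_bounded (dvalue t) (head_meet t) (side_join t).
Proof.
  induction t as [|a t IH|b t IH|t IH b|t1 IH1 t2 IH2]; cbn [dwf]; intros Hwf c h.
  - rewrite dvalue_DX, head_meet_DX, side_join_DX; revert c h; apply prefix_bounded_id.
  - apply andb_prop in Hwf as [Ha%negb_true_iff Ht].
    rewrite dvalue_DImp, head_meet_DImp, side_join_DImp by exact Ha; revert c h.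
    apply prefix_bounded_imp; [apply dvalue_inflationary | apply IH]; exact Ht.
  - apply andb_prop in Hwf as [Hb%negb_true_iff Ht].
    rewrite dvalue_DOrL, head_meet_DOrL, side_join_DOrL by exact Hb; revert c h.
    apply prefix_bounded_join_const, IH, Ht.
  - apply andb_prop in Hwf as [Hb%negb_true_iff Ht].
    rewrite dvalue_DOrR, head_meet_DOrR, side_join_DOrR by exact Hb; revert c h.
    apply prefix_bounded_join_const, IH, Ht.
  - apply andb_prop in Hwf as [Ht1 Ht2].
    rewrite dvalue_DOr, head_meet_DOr, side_join_DOr; revert c h.
    apply prefix_bounded_join; [apply side_join_le_dvalue .. | apply IH1 | apply IH2]; assumption.
Qed.

End DisjunctiveValue.

Theorem mainTheorem12 (x : nat) (t : dtree) (Hwf : dwf x t = true)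
  (H : HeytingAlgebra) (v : nat -> H) :
  (forall h1 h2 : H, le H h1 h2 ->
     le H (eval (upd v x h1) (dform x t)) (eval (upd v x h2) (dform x t))) /\
  is_least_fixed_point (fun h : H => eval (upd v x h) (dform x t))
    (eval v (FImp (bigAnd (Head t)) (bigOr (Side t)))).
Proof.
  change (eval v (FImp _ _)) with (head_meet v t ⇒ side_join v t).
  split; [exact (dvalue_mono v x t Hwf) | split].
  - apply le_antisym.
    + transitivity (head_meet v t ⇒ (head_meet v t ⇒ side_join v t) ⊔ side_join v t);
        [apply dvalue_le_imp, Hwf | apply imp_join_imp_le].
    + apply dvalue_inflationary, Hwf.
  - intros h Hfix; cbv beta in Hfix.
    transitivity (top H ⊓ (head_meet v t ⇒ h ⊔ side_join v t)).
    + apply meet_greatest; [apply top_greatest | apply imp_mono_r, le_join_r].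
    + apply (dvalue_prefix_bounded v x t Hwf).
      unfold dvalue; rewrite Hfix; apply le_meet_r.
Qed.
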